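(* Let $\mathsf E$ be a small preadditive category and $R=R_{\mathsf E}$ the associated ring. Then the category of c-unital left $R$-modules is naturally equivalent to the category of left $\mathsf E$-modules. The equivalence assigns to a left $\mathsf E$-module $\mathsf P$ the c-unital left $R$-module $P=\prod_{x\in\mathsf E}\mathsf P(x)$, with the action of $R$ on $P$ induced by the action of $\mathsf E$ on $\mathsf P$.
   Context: A small preadditive category is a small category enriched in abelian groups. Its associated ring is $R_{\mathsf E}=\bigoplus_{x,y\in\mathsf E}\mathrm{Hom}_{\mathsf E}(x,y)$, with multiplication given by composition of composable morphisms and zero product for noncomposable ones (a nonunital associative ring when $\mathsf E$ has infinitely many objects). A left $\mathsf E$-module is an additive covariant functor $\mathsf E\to\mathsf{Ab}$. Modules over $R$ are not assumed unital; a left $R$-module $P$ is c-unital if the natural map $P\to\mathrm{Hom}_R(R,P)$, $p\mapsto(r\mapsto rp)$, is an isomorphism. *)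

From Stdlib Require Import List ClassicalEpsilon Classical FunctionalExtensionality.
Import ListNotations.

Set Implicit Arguments.

Record Zmod := {
  zcar :> Type;
  zzero : zcar;
  zadd : zcar -> zcar -> zcar;
  zopp : zcar -> zcar;
  zaddA : forall a b c, zadd a (zadd b c) = zadd (zadd a b) c;
  zaddC : forall a b, zadd a b = zadd b a;
  zadd0 : forall a, zadd zzero a = a;
  zaddN : forall a, zadd (zopp a) a = zzero }.
Arguments zzero {_}.
Arguments zadd {_}.
Arguments zopp {_}.
Arguments zaddA {_}.
Arguments zaddC {_}.
Arguments zadd0 {_}.
Arguments zaddN {_}.

Definition additive {A B : Zmod} (f : A -> B) : Prop :=
  forall a b, f (zadd a b) = zadd (f a) (f b).

Lemma z_idem (A : Zmod) (a : A) : zadd a a = a -> a = zzero.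
Proof.
  intro H. rewrite <- (zaddN a). rewrite <- H at 3. rewrite zaddA, zaddN, zadd0.
  reflexivity.
Qed.

Lemma zadd00 (A : Zmod) : zadd (@zzero A) zzero = zzero.
Proof. apply zadd0. Qed.

Record PreaddCat := {
  Obj : Type;
  Hom : Obj -> Obj -> Zmod;
  comp : forall x y z, Hom y z -> Hom x y -> Hom x z;
  idm : forall x, Hom x x;
  comp_assoc : forall w x y z (h : Hom y z) (g : Hom x y) (f : Hom w x),
      comp w y z h (comp w x y g f) = comp w x z (comp x y z h g) f;
  comp_id_l : forall x y (f : Hom x y), comp x y y (idm y) f = f;
  comp_id_r : forall x y (f : Hom x y), comp x x y f (idm x) = f;
  comp_addl : forall x y z (g g' : Hom y z) (f : Hom x y),
      comp x y z (zadd g g') f = zadd (comp x y z g f) (comp x y z g' f);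
  comp_addr : forall x y z (g : Hom y z) (f f' : Hom x y),
      comp x y z g (zadd f f') = zadd (comp x y z g f) (comp x y z g f') }.
Arguments comp {_ _ _ _}.
Arguments idm {_}.

Lemma comp_0l (E : PreaddCat) x y z (f : Hom E x y) :
  comp (@zzero (Hom E y z)) f = zzero.
Proof. apply z_idem. rewrite <- comp_addl, zadd00. reflexivity. Qed.

(** * Finite sums of finitely supported families (classically defined):
    sum over some duplicate-free list containing the support. *)
Definition fsupp {I : Type} {A : Zmod} (g : I -> A) (l : list I) : Prop :=
  NoDup l /\ forall i, g i <> zzero -> In i l.

Definition finsum {I : Type} {A : Zmod} (g : I -> A) : A :=
  match excluded_middle_informative (exists l, fsupp g l) with
  | left H => fold_right (fun i acc => zadd (g i) acc) zzero
                (proj1_sig (constructive_indefinite_description _ H))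
  | right _ => zzero
  end.

Lemma finsum_zero (I : Type) (A : Zmod) (g : I -> A) :
  (forall i, g i = zzero) -> finsum g = zzero.
Proof.
  intro Hg. unfold finsum. destruct excluded_middle_informative; [|reflexivity].
  induction (proj1_sig _) as [|i l IH]; simpl; [reflexivity|].
  rewrite IH, Hg. apply zadd00.
Qed.

(** * The ring R_E = (+)_{x,y} Hom(x,y): finitely supported families *)
Record Relt (E : PreaddCat) := {
  rfun : forall x y, Hom E x y;
  rfin : exists l : list (Obj E * Obj E),
      forall x y, rfun x y <> zzero -> In (x, y) l }.
Arguments rfun {E}.

Section RingR.
Variable E : PreaddCat.

Lemma radd_fin (r s : Relt E) : exists l : list (Obj E * Obj E),
  forall x y, zadd (rfun r x y) (rfun s x y) <> zzero -> In (x, y) l.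
Proof.
  destruct (rfin r) as [lr Hr]; destruct (rfin s) as [ls Hs].
  exists (lr ++ ls). intros x y H. apply in_or_app.
  destruct (classic (rfun r x y = zzero)) as [E1|E1]; [|left; auto].
  destruct (classic (rfun s x y = zzero)) as [E2|E2]; [|right; auto].
  exfalso; apply H; rewrite E1, E2; apply zadd00.
Qed.

Definition radd (r s : Relt E) : Relt E :=
  {| rfun := fun x y => zadd (rfun r x y) (rfun s x y); rfin := radd_fin r s |}.

Definition rmul_fun (r s : Relt E) (x z : Obj E) : Hom E x z :=
  finsum (fun y => comp (rfun r y z) (rfun s x y)).

Lemma rmul_fin (r s : Relt E) : exists l : list (Obj E * Obj E),
  forall x z, rmul_fun r s x z <> zzero -> In (x, z) l.
Proof.
  destruct (rfin r) as [lr Hr]; destruct (rfin s) as [ls Hs].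
  exists (flat_map (fun p => map (fun q => (fst p, snd q)) lr) ls).
  intros x z H.
  destruct (classic (exists y, comp (rfun r y z) (rfun s x y) <> zzero))
    as [[y Hy]|Hn].
  - apply in_flat_map. exists (x, y). split.
    + apply Hs. intro E0. apply Hy. rewrite E0.
      apply z_idem. rewrite <- comp_addr, zadd00. reflexivity.
    + apply in_map_iff. exists (y, z). split; [reflexivity|].
      apply Hr. intro E0. apply Hy. rewrite E0. apply comp_0l.
  - exfalso. apply H. apply finsum_zero. intro y.
    apply NNPP. intro Hy. apply Hn. exists y. exact Hy.
Qed.

Definition rmul (r s : Relt E) : Relt E :=
  {| rfun := rmul_fun r s; rfin := rmul_fin r s |}.

End RingR.

Record RModData (E : PreaddCat) := {
  rm_car : Zmod;
  rm_act : Relt E -> rm_car -> rm_car }.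
Arguments rm_car {E}.
Arguments rm_act {E}.

Section Modules.
Variable E : PreaddCat.

Definition is_RMod (M : RModData E) : Prop :=
  (forall r s m, rm_act M (radd r s) m = zadd (rm_act M r m) (rm_act M s m)) /\
  (forall r m n, rm_act M r (zadd m n) = zadd (rm_act M r m) (rm_act M r n)) /\
  (forall r s m, rm_act M (rmul r s) m = rm_act M r (rm_act M s m)).

Definition RHom_from_R (M : RModData E) (f : Relt E -> rm_car M) : Prop :=
  (forall r s, f (radd r s) = zadd (f r) (f s)) /\
  (forall r s, f (rmul r s) = rm_act M r (f s)).

(* c-unital: the natural map M -> Hom_R(R,M), m |-> (r |-> r m),
   is bijective (it is always an additive map into Hom_R(R,M)). *)
Definition c_unital (M : RModData E) : Prop :=
  (forall m n, (forall r, rm_act M r m = rm_act M r n) -> m = n) /\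
  (forall f, RHom_from_R M f -> exists m, forall r, f r = rm_act M r m).

Definition RLinear (M N : RModData E) (f : rm_car M -> rm_car N) : Prop :=
  additive f /\ (forall r m, f (rm_act M r m) = rm_act N r (f m)).

(** * Left E-modules: additive functors E -> Ab *)
Record EModule := {
  em_obj : Obj E -> Zmod;
  em_act : forall x y, Hom E x y -> em_obj x -> em_obj y;
  em_act_addl : forall x y (f g : Hom E x y) p,
      em_act x y (zadd f g) p = zadd (em_act x y f p) (em_act x y g p);
  em_act_addr : forall x y (f : Hom E x y), additive (em_act x y f);
  em_act_id : forall x p, em_act x x (idm x) p = p;
  em_act_comp : forall x y z (g : Hom E y z) (f : Hom E x y) p,
      em_act x z (comp g f) p = em_act y z g (em_act x y f p) }.

Definition EHom (P Q : EModule) (phi : forall x, em_obj P x -> em_obj Q x) : Prop :=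
  (forall x, additive (phi x)) /\
  (forall x y (f : Hom E x y) p, phi y (em_act P x y f p) = em_act Q x y f (phi x p)).

Section Prod.
Variable P : EModule.
Definition pcar := forall x, em_obj P x.
Definition pzero : pcar := fun x => zzero.
Definition padd (p q : pcar) : pcar := fun x => zadd (p x) (q x).
Definition popp (p : pcar) : pcar := fun x => zopp (p x).
Lemma paddA a b c : padd a (padd b c) = padd (padd a b) c.
Proof. apply functional_extensionality_dep; intro; apply zaddA. Qed.
Lemma paddC a b : padd a b = padd b a.
Proof. apply functional_extensionality_dep; intro; apply zaddC. Qed.
Lemma padd0 a : padd pzero a = a.
Proof. apply functional_extensionality_dep; intro; apply zadd0. Qed.
Lemma paddN a : padd (popp a) a = pzero.
Proof. apply functional_extensionality_dep; intro; apply zaddN. Qed.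
Definition prodZmod : Zmod := @Build_Zmod pcar pzero padd popp paddA paddC padd0 paddN.
End Prod.

Definition F_obj (P : EModule) : RModData E :=
  {| rm_car := prodZmod P;
     rm_act := fun r (p : pcar P) =>
       (fun y => finsum (fun x => em_act P x y (rfun r x y) (p x))) : pcar P |}.

Definition F_mor (P Q : EModule) (phi : forall x, em_obj P x -> em_obj Q x)
  : rm_car (F_obj P) -> rm_car (F_obj Q) :=
  fun (p : pcar P) => (fun x => phi x (p x)) : pcar Q.

End Modules.

(* R_E has local units: [1_x] is the identity of [x] placed at [(x, x)], and
   every [r] is the finite sum of its columns [r 1_x].  On [prod_x P(x)] the
   unit [1_x] acts as the projection onto [P(x)], so R-linear maps out of [R]
   or between such products are determined by what they do on the summands;
   this gives c-unitality, fullness and faithfulness.  Conversely a c-unital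
   [M] is recovered from the E-module [x |-> 1_x M]: [m |-> (1_x m)_x] is
   injective because [r m = sum_x r 1_x m] and [M] embeds in [Hom_R(R, M)],
   and a family [(m_x)] is the image of the element representing the
   R-linear map [r |-> sum_x r m_x]. *)

From Stdlib Require Import List ClassicalEpsilon Classical FunctionalExtensionality.
Import ListNotations.
Set Implicit Arguments.

Section ZmodFacts.
Context {A : Zmod}.
Implicit Types a b c d : A.

Lemma zaddr0 a : zadd a zzero = a.
Proof. rewrite zaddC; apply zadd0. Qed.

Lemma zaddCA a b c : zadd a (zadd b c) = zadd b (zadd a c).
Proof. rewrite !zaddA, (zaddC a b); reflexivity. Qed.

Lemma zaddACA a b c d : zadd (zadd a b) (zadd c d) = zadd (zadd a c) (zadd b d).
Proof. rewrite <- !zaddA; f_equal; apply zaddCA. Qed.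

Lemma zopp_unique a b : zadd a b = zzero -> a = zopp b.
Proof.
  intro H. rewrite <- (zadd0 a), <- (zaddN b), <- zaddA, (zaddC b a), H.
  apply zaddr0.
Qed.

End ZmodFacts.

Section Additive.
Variables (A B : Zmod) (f : A -> B).
Hypothesis f_add : additive f.

Lemma additive0 : f zzero = zzero.
Proof. apply z_idem; rewrite <- f_add, zadd00; reflexivity. Qed.

Lemma additiveN a : f (zopp a) = zopp (f a).
Proof. apply zopp_unique; rewrite <- f_add, zaddN; apply additive0. Qed.

End Additive.

Section ListSums.
Context {I : Type} {A : Zmod}.
Implicit Types (g h : I -> A) (l : list I).

Definition lsum g l : A := fold_right (fun i acc => zadd (g i) acc) zzero l.

Lemma lsum_ext g h l : (forall i, In i l -> g i = h i) -> lsum g l = lsum h l.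
Proof.
  induction l as [|i l IH]; intro H; [reflexivity|]; simpl.
  rewrite H, IH; [reflexivity| |left; reflexivity].
  intros j Hj; apply H; right; exact Hj.
Qed.

Lemma lsum_eq0 g l : (forall i, In i l -> g i = zzero) -> lsum g l = zzero.
Proof.
  induction l as [|i l IH]; intro H; [reflexivity|]; simpl.
  rewrite H, IH; [apply zadd00| |left; reflexivity].
  intros j Hj; apply H; right; exact Hj.
Qed.

Lemma lsumD g h l : lsum (fun i => zadd (g i) (h i)) l = zadd (lsum g l) (lsum h l).
Proof.
  induction l as [|i l IH]; simpl; [symmetry; apply zadd00|].
  rewrite IH; apply zaddACA.
Qed.

Lemma lsum_app_cons g l1 i l2 :
  lsum g (l1 ++ i :: l2) = zadd (g i) (lsum g (l1 ++ l2)).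
Proof.
  induction l1 as [|j l1 IH]; simpl; [reflexivity|].
  rewrite IH; apply zaddCA.
Qed.

Lemma lsum_eq_on_support g l1 l2 :
  NoDup l1 -> NoDup l2 -> (forall i, g i <> zzero -> (In i l1 <-> In i l2)) ->
  lsum g l1 = lsum g l2.
Proof.
  revert l2; induction l1 as [|i l1 IH]; intros l2 N1 N2 H.
  - symmetry; apply lsum_eq0; intros j Hj.
    apply NNPP; intro Hgj; apply (proj2 (H j Hgj) Hj).
  - inversion N1 as [|? ? Hi1 N1']; subst; simpl.
    destruct (classic (g i = zzero)) as [Hgi|Hgi].
    + rewrite Hgi, zadd0; apply IH; auto.
      intros k Hk; rewrite <- (H k Hk); simpl.
      split; [auto|intros [<-|]; [contradiction|auto]].
    + destruct (in_split _ _ (proj1 (H i Hgi) (or_introl eq_refl))) as (a & b & ->).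
      rewrite lsum_app_cons; f_equal; apply IH; auto.
      * exact (NoDup_remove_1 _ _ _ N2).
      * intros k Hk; specialize (H k Hk); simpl in H.
        pose proof (NoDup_remove_2 _ _ _ N2) as Hib.
        rewrite in_app_iff in *; simpl in H.
        split; intro Hk'.
        -- assert (k <> i) by (intros ->; contradiction). firstorder congruence.
        -- assert (k <> i) by (intros ->; tauto). firstorder congruence.
Qed.

Lemma finsum_lsum g l :
  NoDup l -> (forall i, ~ In i l -> g i = zzero) -> finsum g = lsum g l.
Proof.
  intros N H. unfold finsum. destruct excluded_middle_informative as [Hx|Hx].
  - destruct (constructive_indefinite_description _ Hx) as [l' [N' H']]; simpl.
    apply lsum_eq_on_support; auto. intros i Hi; split; auto.
    intro; apply NNPP; intro; apply Hi, H; auto.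
  - exfalso; apply Hx; exists l; split; auto.
    intros i Hi; apply NNPP; intro; apply Hi, H; auto.
Qed.

Lemma finsum_single g i : (forall j, j <> i -> g j = zzero) -> finsum g = g i.
Proof.
  intro H. rewrite (finsum_lsum g (l := [i])); simpl.
  - apply zaddr0.
  - repeat constructor; auto.
  - intros j Hj; apply H; intros ->; apply Hj; left; reflexivity.
Qed.

Lemma lsum_single g l i :
  NoDup l -> In i l -> (forall j, j <> i -> g j = zzero) -> lsum g l = g i.
Proof.
  intros N Hi H. rewrite <- (finsum_lsum g N); [apply finsum_single; auto|].
  intros j Hj; apply H; intros ->; contradiction.
Qed.

End ListSums.

Lemma additive_lsum {I : Type} {A B : Zmod} {f : A -> B} {g : I -> A} {l} :
  additive f -> f (lsum g l) = lsum (fun i => f (g i)) l.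
Proof.
  intro Hf; induction l as [|i l IH]; simpl; [apply additive0; auto|].
  rewrite Hf, IH; reflexivity.
Qed.

Lemma lsum_exchange (I J : Type) (A : Zmod) (h : I -> J -> A) l1 l2 :
  lsum (fun i => lsum (h i) l2) l1 = lsum (fun j => lsum (fun i => h i j) l1) l2.
Proof.
  induction l1 as [|i l1 IH]; simpl.
  - symmetry; apply lsum_eq0; reflexivity.
  - rewrite IH, <- lsumD; reflexivity.
Qed.

Lemma exists_NoDup_same_elements (I : Type) (l : list I) :
  exists l', NoDup l' /\ forall i, In i l -> In i l'.
Proof.
  induction l as [|a l [l' [N H]]].
  - exists nil; split; [constructor|contradiction].
  - destruct (classic (In a l')).
    + exists l'; split; auto. intros i [<-|]; auto.
    + exists (a :: l'); split; [constructor; auto|]. intros i [<-|]; simpl; auto.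
Qed.

Section Dsingle.
Context {I : Type} (T : I -> Zmod).

Definition dsingle (i : I) (v : T i) (j : I) : T j :=
  match excluded_middle_informative (i = j) with
  | left e => eq_rect i T v j e
  | right _ => zzero
  end.

Lemma dsingle_same i v : dsingle i v i = v.
Proof.
  unfold dsingle; destruct excluded_middle_informative as [e|n]; [|congruence].
  rewrite (proof_irrelevance _ e eq_refl); reflexivity.
Qed.

Lemma dsingle_diff i v j : i <> j -> dsingle i v j = zzero.
Proof. intro H; unfold dsingle; destruct excluded_middle_informative; easy. Qed.

Lemma dsingleD i a b j :
  dsingle i (zadd a b) j = zadd (dsingle i a j) (dsingle i b j).
Proof.
  destruct (classic (i = j)) as [<-|n].
  - rewrite !dsingle_same; reflexivity.
  - rewrite !dsingle_diff by exact n; symmetry; apply zadd00.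
Qed.

End Dsingle.

Section RingFacts.
Context {E : PreaddCat}.
Implicit Types (r s : Relt E) (x y z w : Obj E) (L : list (Obj E)).

Lemma comp_0r x y z (g : Hom E y z) : comp g (@zzero (Hom E x y)) = zzero.
Proof. apply z_idem; rewrite <- comp_addr, zadd00; reflexivity. Qed.

Lemma relt_ext r s : (forall x y, rfun r x y = rfun s x y) -> r = s.
Proof.
  destruct r as [r Hr], s as [s Hs]; simpl; intro H.
  assert (r = s) as <-.
  { apply functional_extensionality_dep; intro x.
    apply functional_extensionality_dep; intro y; apply H. }
  f_equal; apply proof_irrelevance.
Qed.

Lemma rzero_fin : exists l : list (Obj E * Obj E),
  forall x y, @zzero (Hom E x y) <> zzero -> In (x, y) l.
Proof. exists nil; intros x y H; contradiction H; reflexivity. Qed.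

Definition rzero : Relt E := {| rfun := fun x y => zzero; rfin := rzero_fin |}.

Lemma rfun_radd r s x y : rfun (radd r s) x y = zadd (rfun r x y) (rfun s x y).
Proof. reflexivity. Qed.

Lemma rfun_rmul r s x z :
  rfun (rmul r s) x z = finsum (fun y => comp (rfun r y z) (rfun s x y)).
Proof. reflexivity. Qed.

Lemma radd_rzero : radd rzero rzero = rzero.
Proof. apply relt_ext; intros; apply zadd00. Qed.

Definition rsum {I : Type} (h : I -> Relt E) (l : list I) : Relt E :=
  fold_right (fun i acc => radd (h i) acc) rzero l.

Lemma rfun_rsum {I : Type} (h : I -> Relt E) l x y :
  rfun (rsum h l) x y = lsum (fun i => rfun (h i) x y) l.
Proof. induction l as [|i l IH]; simpl; [reflexivity|]; rewrite IH; reflexivity. Qed.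

Definition hom_pair (p : Obj E * Obj E) : Zmod := Hom E (fst p) (snd p).

Definition single_entry {x y} (a : Hom E x y) (x' y' : Obj E) : Hom E x' y' :=
  dsingle hom_pair (x, y) a (x', y').

Lemma single_entry_fin {x y} (a : Hom E x y) : exists l : list (Obj E * Obj E),
  forall x' y', single_entry a x' y' <> zzero -> In (x', y') l.
Proof.
  exists [(x, y)]; intros x' y' H; left.
  apply NNPP; intro n; apply H.
  exact (@dsingle_diff _ hom_pair (x, y) a _ n).
Qed.

Definition rsingle {x y} (a : Hom E x y) : Relt E :=
  {| rfun := single_entry a; rfin := single_entry_fin a |}.

Definition local_unit x : Relt E := rsingle (idm x).

Lemma rsingle_same {x y} (a : Hom E x y) : rfun (rsingle a) x y = a.
Proof. exact (@dsingle_same _ hom_pair (x, y) a). Qed.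

Lemma rsingle_diff {x y} (a : Hom E x y) x' y' :
  (x, y) <> (x', y') -> rfun (rsingle a) x' y' = zzero.
Proof. exact (@dsingle_diff _ hom_pair (x, y) a (x', y')). Qed.

Lemma rsingleD {x y} (a b : Hom E x y) :
  rsingle (zadd a b) = radd (rsingle a) (rsingle b).
Proof.
  apply relt_ext; intros x' y'.
  exact (dsingleD hom_pair (x, y) a b (x', y')).
Qed.

Lemma rmul_single {x y z} (a : Hom E y z) (b : Hom E x y) :
  rmul (rsingle a) (rsingle b) = rsingle (comp a b).
Proof.
  apply relt_ext; intros x' z'; rewrite rfun_rmul.
  destruct (classic ((x, z) = (x', z'))) as [e|n].
  - injection e as <- <-. rewrite (rsingle_same (comp a b)).
    rewrite (@finsum_single _ _ _ y).
    + rewrite !rsingle_same; reflexivity.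
    + intros j Hj; rewrite (rsingle_diff a) by congruence; apply comp_0l.
  - rewrite rsingle_diff by exact n; apply finsum_zero; intro j.
    destruct (classic (x = x')) as [<-|nx].
    + rewrite (rsingle_diff a) by congruence; apply comp_0l.
    + rewrite (rsingle_diff b) by congruence; apply comp_0r.
Qed.

Lemma local_unit_idem x : rmul (local_unit x) (local_unit x) = local_unit x.
Proof. unfold local_unit; rewrite rmul_single, comp_id_l; reflexivity. Qed.

Lemma rmul_local_unit_same r x z : rfun (rmul r (local_unit x)) x z = rfun r x z.
Proof.
  unfold local_unit; rewrite rfun_rmul, (@finsum_single _ _ _ x).
  - rewrite rsingle_same; apply comp_id_r.
  - intros j Hj; rewrite rsingle_diff by congruence; apply comp_0r.
Qed.

Lemma rmul_local_unit_diff r x x' z :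
  x' <> x -> rfun (rmul r (local_unit x)) x' z = zzero.
Proof.
  intro H; unfold local_unit; rewrite rfun_rmul; apply finsum_zero; intro j.
  rewrite rsingle_diff by congruence; apply comp_0r.
Qed.

Lemma rmul_local_unit_eq0 r x :
  (forall z, rfun r x z = zzero) -> rmul r (local_unit x) = rzero.
Proof.
  intro H; apply relt_ext; intros x' z.
  destruct (classic (x' = x)) as [->|n].
  - rewrite rmul_local_unit_same; apply H.
  - apply rmul_local_unit_diff, n.
Qed.

Definition supported_on r L : Prop :=
  forall x y, rfun r x y <> zzero -> In x L /\ In y L.

Lemma supported_on_src {r L x y} : supported_on r L -> ~ In x L -> rfun r x y = zzero.
Proof. intros H Hx; apply NNPP; intro n; apply Hx, (H _ _ n). Qed.

Lemma supported_on_tgt {r L x y} : supported_on r L -> ~ In y L -> rfun r x y = zzero.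
Proof. intros H Hy; apply NNPP; intro n; apply Hy, (H _ _ n). Qed.

Lemma exists_common_support r s :
  exists L, NoDup L /\ supported_on r L /\ supported_on s L.
Proof.
  destruct (rfin r) as [lr Hr], (rfin s) as [ls Hs].
  destruct (exists_NoDup_same_elements
              (map fst lr ++ map snd lr ++ map fst ls ++ map snd ls)) as [L [N HL]].
  assert (Hpair : forall (l : list (Obj E * Obj E)) x y, In (x, y) l ->
            In x (map fst l) /\ In y (map snd l)).
  { intros l x y H; split; apply in_map_iff; exists (x, y); auto. }
  exists L; split; [exact N|split]; intros x y n.
  - destruct (Hpair _ _ _ (Hr _ _ n)); split; apply HL; rewrite !in_app_iff; tauto.
  - destruct (Hpair _ _ _ (Hs _ _ n)); split; apply HL; rewrite !in_app_iff; tauto.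
Qed.

Lemma exists_support r : exists L, NoDup L /\ supported_on r L.
Proof. destruct (exists_common_support r r) as (L & N & H & _); eauto. Qed.

Lemma supported_on_radd r s L :
  supported_on r L -> supported_on s L -> supported_on (radd r s) L.
Proof.
  intros Hr Hs x y n; rewrite rfun_radd in n.
  destruct (classic (rfun r x y = zzero)) as [e|e]; [|exact (Hr _ _ e)].
  destruct (classic (rfun s x y = zzero)) as [e'|e']; [|exact (Hs _ _ e')].
  exfalso; apply n; rewrite e, e'; apply zadd00.
Qed.

Lemma rmul_lsum {r s L x z} : NoDup L -> supported_on r L ->
  rfun (rmul r s) x z = lsum (fun y => comp (rfun r y z) (rfun s x y)) L.
Proof.
  intros N Hr; apply finsum_lsum; [exact N|]; intros y Hy.
  rewrite (supported_on_src Hr Hy); apply comp_0l.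
Qed.

Lemma supported_on_rmul r s L : NoDup L ->
  supported_on r L -> supported_on s L -> supported_on (rmul r s) L.
Proof.
  intros N Hr Hs x z n; rewrite (rmul_lsum N Hr) in n; split; apply NNPP; intro Hn;
    apply n, lsum_eq0; intros y _.
  - rewrite (supported_on_src Hs Hn); apply comp_0r.
  - rewrite (supported_on_tgt Hr Hn); apply comp_0l.
Qed.

Lemma rsum_rmul_local_unit r L : NoDup L -> supported_on r L ->
  rsum (fun x => rmul r (local_unit x)) L = r.
Proof.
  intros N H; apply relt_ext; intros x z; rewrite rfun_rsum.
  destruct (classic (In x L)) as [Hx|Hx].
  - rewrite (lsum_single _ N Hx); [apply rmul_local_unit_same|].
    intros j Hj; apply rmul_local_unit_diff; auto.
  - rewrite (supported_on_src H Hx); apply lsum_eq0; intros j Hj.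
    apply rmul_local_unit_diff; intros ->; contradiction.
Qed.

Lemma local_unit_rmul_rsum r y L : NoDup L -> supported_on r L ->
  rmul (local_unit y) r = rsum (fun x => rsingle (rfun r x y)) L.
Proof.
  intros N H; apply relt_ext; intros x z; unfold local_unit; rewrite rfun_rsum, rfun_rmul.
  destruct (classic (y = z)) as [<-|nz].
  - rewrite (@finsum_single _ _ _ y).
    + rewrite rsingle_same, comp_id_l.
      destruct (classic (In x L)) as [Hx|Hx].
      * rewrite (lsum_single _ N Hx); [symmetry; apply rsingle_same|].
        intros j Hj; apply rsingle_diff; congruence.
      * rewrite (supported_on_src H Hx); symmetry; apply lsum_eq0; intros j Hj.
        apply rsingle_diff; intro e; injection e as ->; contradiction.
    + intros j Hj; rewrite rsingle_diff by congruence; apply comp_0l.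
  - rewrite finsum_zero.
    + symmetry; apply lsum_eq0; intros; apply rsingle_diff; congruence.
    + intro j; rewrite rsingle_diff by congruence; apply comp_0l.
Qed.

End RingFacts.

Section RModFacts.
Variables (E : PreaddCat) (M : RModData E).
Hypothesis HM : is_RMod M.

Lemma act_radd r s m : rm_act M (radd r s) m = zadd (rm_act M r m) (rm_act M s m).
Proof. apply (proj1 HM). Qed.

Lemma act_additive r : additive (rm_act M r).
Proof. intros m n; apply (proj1 (proj2 HM)). Qed.

Lemma act_rmul r s m : rm_act M (rmul r s) m = rm_act M r (rm_act M s m).
Proof. apply (proj2 (proj2 HM)). Qed.

Lemma act_rzero m : rm_act M rzero m = zzero.
Proof. apply z_idem; rewrite <- act_radd, radd_rzero; reflexivity. Qed.

Lemma act_rsum (I : Type) (h : I -> Relt E) l m :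
  rm_act M (rsum h l) m = lsum (fun i => rm_act M (h i) m) l.
Proof.
  induction l as [|i l IH]; simpl; [apply act_rzero|].
  rewrite act_radd, IH; reflexivity.
Qed.

End RModFacts.

Lemma RHom_rsum (E : PreaddCat) (M : RModData E) (f : Relt E -> rm_car M)
    (I : Type) (h : I -> Relt E) l :
  RHom_from_R M f -> f (rsum h l) = lsum (fun i => f (h i)) l.
Proof.
  intros [Hadd _]; induction l as [|i l IH]; simpl.
  - apply z_idem; rewrite <- Hadd, radd_rzero; reflexivity.
  - rewrite Hadd, IH; reflexivity.
Qed.

Lemma RLinear_inverse {E : PreaddCat} {M N : RModData E} {f g} :
  RLinear M N f -> (forall m, g (f m) = m) -> (forall n, f (g n) = n) ->
  RLinear N M g.
Proof.
  intros [Hadd Hact] gK fK; split.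
  - intros a b; rewrite <- (fK a), <- (fK b), <- Hadd, !gK; reflexivity.
  - intros r n; rewrite <- (fK n), <- Hact, !gK; reflexivity.
Qed.

Section ProductModule.
Variables (E : PreaddCat) (P : EModule E).
Implicit Types (r s : Relt E) (p : pcar P) (x y z : Obj E).

Lemma em_act0l x y (v : em_obj P x) : em_act P x y zzero v = zzero.
Proof. apply z_idem; rewrite <- em_act_addl, zadd00; reflexivity. Qed.

Lemma em_act0r x y (a : Hom E x y) : em_act P x y a zzero = zzero.
Proof. apply additive0, em_act_addr. Qed.

Lemma em_act_additivel {x y} (v : em_obj P x) :
  additive (fun a : Hom E x y => em_act P x y a v).
Proof. intros a b; apply em_act_addl. Qed.

Lemma F_act_apply r p y :
  (rm_act (F_obj P) r p : pcar P) y = finsum (fun x => em_act P x y (rfun r x y) (p x)).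
Proof. reflexivity. Qed.

Lemma F_act_lsum {r p y L} : NoDup L -> supported_on r L ->
  (rm_act (F_obj P) r p : pcar P) y = lsum (fun x => em_act P x y (rfun r x y) (p x)) L.
Proof.
  intros N H; rewrite F_act_apply; apply finsum_lsum; [exact N|]; intros x Hx.
  rewrite (supported_on_src H Hx); apply em_act0l.
Qed.

Lemma prod_add_apply (p q : prodZmod P) y : (zadd p q : pcar P) y = zadd (p y) (q y).
Proof. reflexivity. Qed.

Lemma lsum_prod_apply (I : Type) (h : I -> pcar P) l y :
  (lsum (A := prodZmod P) h l : pcar P) y = lsum (fun i => h i y) l.
Proof.
  induction l as [|i l IH]; simpl; [reflexivity|].
  unfold padd; rewrite IH; reflexivity.
Qed.

Lemma F_act_rsingle {x y} (a : Hom E x y) p z :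
  (rm_act (F_obj P) (rsingle a) p : pcar P) z =
  dsingle (em_obj P) y (em_act P x y a (p x)) z.
Proof.
  destruct (classic (y = z)) as [<-|n].
  - rewrite dsingle_same, F_act_apply, (@finsum_single _ _ _ x).
    + rewrite rsingle_same; reflexivity.
    + intros j Hj; rewrite rsingle_diff by congruence; apply em_act0l.
  - rewrite dsingle_diff, F_act_apply by exact n; apply finsum_zero; intro j.
    rewrite rsingle_diff by congruence; apply em_act0l.
Qed.

Lemma F_act_local_unit x p :
  rm_act (F_obj P) (local_unit x) p = dsingle (em_obj P) x (p x).
Proof.
  apply functional_extensionality_dep; intro z.
  unfold local_unit; rewrite F_act_rsingle, em_act_id; reflexivity.
Qed.

Lemma F_act_rsingle_dsingle {x y} (a : Hom E x y) (v : em_obj P x) :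
  rm_act (F_obj P) (rsingle a) (dsingle (em_obj P) x v) =
  dsingle (em_obj P) y (em_act P x y a v).
Proof.
  apply functional_extensionality_dep; intro z.
  rewrite F_act_rsingle, dsingle_same; reflexivity.
Qed.

Lemma F_act_dsingle r x (v : em_obj P x) y :
  (rm_act (F_obj P) r (dsingle (em_obj P) x v) : pcar P) y = em_act P x y (rfun r x y) v.
Proof.
  rewrite F_act_apply, (@finsum_single _ _ _ x), dsingle_same; [reflexivity|].
  intros w Hw; rewrite dsingle_diff by congruence; apply em_act0r.
Qed.

Lemma F_is_RMod : is_RMod (F_obj P).
Proof.
  split; [|split].
  - intros r s p; apply functional_extensionality_dep; intro y.
    destruct (exists_common_support r s) as (L & N & Hr & Hs).
    rewrite prod_add_apply, !(F_act_lsum N) by auto using supported_on_radd.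
    rewrite <- lsumD; apply lsum_ext; intros x _; apply em_act_addl.
  - intros r p q; apply functional_extensionality_dep; intro y.
    destruct (exists_support r) as (L & N & Hr).
    rewrite prod_add_apply, !(F_act_lsum N Hr).
    rewrite <- lsumD; apply lsum_ext; intros x _; apply em_act_addr.
  - intros r s p; apply functional_extensionality_dep; intro z.
    destruct (exists_common_support r s) as (L & N & Hr & Hs).
    rewrite (F_act_lsum N (supported_on_rmul N Hr Hs)), (F_act_lsum N Hr).
    transitivity (lsum (fun x => lsum (fun y =>
        em_act P y z (rfun r y z) (em_act P x y (rfun s x y) (p x))) L) L).
    + apply lsum_ext; intros x _.
      rewrite (rmul_lsum N Hr), (additive_lsum (em_act_additivel _)).
      apply lsum_ext; intros y _; apply em_act_comp.
    + rewrite lsum_exchange; apply lsum_ext; intros y _.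
      rewrite (F_act_lsum N Hs), additive_lsum by apply em_act_addr.
      reflexivity.
Qed.

Lemma F_c_unital : c_unital (F_obj P).
Proof.
  split.
  - intros p q H; apply functional_extensionality_dep; intro x.
    pose proof (f_equal (fun q : pcar P => q x) (H (local_unit x))) as Hx; cbv beta in Hx.
    rewrite !F_act_local_unit, !dsingle_same in Hx; exact Hx.
  - intros f Hf; set (m := fun x => (f (local_unit x) : pcar P) x).
    assert (f_local_unit : forall x, f (local_unit x) = dsingle (em_obj P) x (m x)).
    { intro x; rewrite <- local_unit_idem, (proj2 Hf), F_act_local_unit; reflexivity. }
    exists m; intro r.
    apply functional_extensionality_dep; intro y.
    destruct (exists_support r) as (L & N & Hr).
    transitivity ((f (rsum (fun x => rmul r (local_unit x)) L) : pcar P) y);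
      [rewrite (rsum_rmul_local_unit N Hr); reflexivity|].
    rewrite (RHom_rsum _ _ Hf), lsum_prod_apply, (F_act_lsum N Hr).
    apply lsum_ext; intros x _.
    rewrite (proj2 Hf), f_local_unit, F_act_dsingle; reflexivity.
Qed.

End ProductModule.

Section Functor.
Variables (E : PreaddCat) (P Q : EModule E).

Lemma F_mor_RLinear (phi : forall x, em_obj P x -> em_obj Q x) :
  EHom P Q phi -> RLinear (F_obj P) (F_obj Q) (F_mor Q phi).
Proof.
  intros [phi_add phi_nat]; split.
  - intros p q; apply functional_extensionality_dep; intro x; apply phi_add.
  - intros r p; apply functional_extensionality_dep; intro y.
    destruct (exists_support r) as (L & N & Hr).
    unfold F_mor; rewrite !(F_act_lsum N Hr), additive_lsum by apply phi_add.
    apply lsum_ext; intros x _; apply phi_nat.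
Qed.

Lemma F_mor_faithful (phi psi : forall x, em_obj P x -> em_obj Q x) :
  (forall p, F_mor Q phi p = F_mor Q psi p) ->
  forall x (v : em_obj P x), phi x v = psi x v.
Proof.
  intros H x v.
  pose proof (f_equal (fun q : pcar Q => q x) (H (dsingle (em_obj P) x v))) as Hx.
  cbv beta in Hx; unfold F_mor in Hx; rewrite dsingle_same in Hx; exact Hx.
Qed.

Lemma F_full (g : rm_car (F_obj P) -> rm_car (F_obj Q)) :
  RLinear (F_obj P) (F_obj Q) g ->
  exists phi : forall x, em_obj P x -> em_obj Q x,
    EHom P Q phi /\ forall p, g p = F_mor Q phi p.
Proof.
  intros [g_add g_act].
  exists (fun x v => (g (dsingle (em_obj P) x v) : pcar Q) x); split; [split|].
  - intros x a b.
    assert (Hd : dsingle (em_obj P) x (zadd a b) =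
                 @zadd (prodZmod P) (dsingle (em_obj P) x a) (dsingle (em_obj P) x b)).
    { apply functional_extensionality_dep; intro w; apply dsingleD. }
    rewrite Hd, g_add; reflexivity.
  - intros x y a v.
    rewrite <- F_act_rsingle_dsingle, g_act, F_act_rsingle, dsingle_same; reflexivity.
  - intro p; apply functional_extensionality_dep; intro y; unfold F_mor.
    rewrite <- F_act_local_unit, g_act, F_act_local_unit, dsingle_same; reflexivity.
Qed.

End Functor.

Section Components.
Variables (E : PreaddCat) (M : RModData E).
Hypothesis HM : is_RMod M.

Definition component (x : Obj E) := {m : rm_car M | rm_act M (local_unit x) m = m}.

Lemma act_local_unit_idem x m :
  rm_act M (local_unit x) (rm_act M (local_unit x) m) = rm_act M (local_unit x) m.
Proof. rewrite <- (act_rmul HM), local_unit_idem; reflexivity. Qed.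

Lemma component_ext x (a b : component x) : proj1_sig a = proj1_sig b -> a = b.
Proof. apply eq_sig_hprop; intros; apply proof_irrelevance. Qed.

Definition to_component x (m : rm_car M) : component x :=
  exist _ (rm_act M (local_unit x) m) (act_local_unit_idem x m).

Lemma component_closed_add x (a b : component x) :
  rm_act M (local_unit x) (zadd (proj1_sig a) (proj1_sig b)) =
  zadd (proj1_sig a) (proj1_sig b).
Proof. rewrite (act_additive HM), (proj2_sig a), (proj2_sig b); reflexivity. Qed.

Lemma component_closed_opp x (a : component x) :
  rm_act M (local_unit x) (zopp (proj1_sig a)) = zopp (proj1_sig a).
Proof. rewrite (additiveN (act_additive HM _)), (proj2_sig a); reflexivity. Qed.

Definition componentZmod (x : Obj E) : Zmod.
Proof.
  refine (@Build_Zmod (component x) (to_component x zzero)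
            (fun a b => exist _ _ (component_closed_add a b))
            (fun a => exist _ _ (component_closed_opp a)) _ _ _ _);
    intros; apply component_ext; simpl.
  - apply zaddA.
  - apply zaddC.
  - rewrite (additive0 (act_additive HM _)); apply zadd0.
  - rewrite (additive0 (act_additive HM _)); apply zaddN.
Defined.

Lemma component_val_additive x : additive (fun v : componentZmod x => proj1_sig v).
Proof. intros a b; reflexivity. Qed.

Lemma component_closed_act {x y} (a : Hom E x y) (v : componentZmod x) :
  rm_act M (local_unit y) (rm_act M (rsingle a) (proj1_sig v)) =
  rm_act M (rsingle a) (proj1_sig v).
Proof.
  unfold local_unit; rewrite <- (act_rmul HM), rmul_single, comp_id_l; reflexivity.
Qed.

Definition component_act x y (a : Hom E x y) (v : componentZmod x) : componentZmod y :=
  exist _ _ (component_closed_act a v).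

Definition EModule_of_RMod : EModule E.
Proof.
  refine (@Build_EModule E componentZmod component_act _ _ _ _);
    repeat intro; apply component_ext; simpl.
  - rewrite rsingleD; apply (act_radd HM).
  - apply (act_additive HM).
  - apply (proj2_sig p).
  - rewrite <- rmul_single; apply (act_rmul HM).
Defined.

Lemma component_act_eq0 r x (v : component x) :
  (forall z, rfun r x z = zzero) -> rm_act M r (proj1_sig v) = zzero.
Proof.
  intro H; rewrite <- (proj2_sig v), <- (act_rmul HM), (rmul_local_unit_eq0 _ _ H).
  apply (act_rzero HM).
Qed.

Definition to_components (m : rm_car M) : pcar EModule_of_RMod :=
  fun x => to_component x m.

Definition sum_components (p : pcar EModule_of_RMod) (r : Relt E) : rm_car M :=
  finsum (fun x => rm_act M r (proj1_sig (p x))).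

Lemma sum_components_lsum {p r L} : NoDup L -> supported_on r L ->
  sum_components p r = lsum (fun x => rm_act M r (proj1_sig (p x))) L.
Proof.
  intros N Hr; apply finsum_lsum; [exact N|]; intros x Hx.
  apply component_act_eq0; intro z; apply (supported_on_src Hr Hx).
Qed.

Lemma sum_components_RHom p : RHom_from_R M (sum_components p).
Proof.
  split.
  - intros r s; destruct (exists_common_support r s) as (L & N & Hr & Hs).
    rewrite !(sum_components_lsum N) by auto using supported_on_radd.
    rewrite <- lsumD; apply lsum_ext; intros x _; apply (act_radd HM).
  - intros r s; destruct (exists_common_support r s) as (L & N & Hr & Hs).
    rewrite (sum_components_lsum N (supported_on_rmul N Hr Hs)),
      (sum_components_lsum N Hs), (additive_lsum (act_additive HM r)).
    apply lsum_ext; intros x _; apply (act_rmul HM).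
Qed.

Section CUnital.
Hypothesis HC : c_unital M.

Definition from_components (p : pcar EModule_of_RMod) : rm_car M :=
  proj1_sig (constructive_indefinite_description _
    (proj2 HC (sum_components p) (sum_components_RHom p))).

Lemma from_componentsP p r : sum_components p r = rm_act M r (from_components p).
Proof.
  unfold from_components.
  destruct constructive_indefinite_description as [m Hm]; apply Hm.
Qed.

Lemma to_from_components p : to_components (from_components p) = p.
Proof.
  apply functional_extensionality_dep; intro x; apply component_ext; simpl.
  rewrite <- from_componentsP; unfold sum_components; rewrite (@finsum_single _ _ _ x).
  - apply (proj2_sig (p x)).
  - intros w Hw; apply component_act_eq0; intro z; apply rsingle_diff; congruence.
Qed.

Lemma from_to_components m : from_components (to_components m) = m.
Proof.
  apply (proj1 HC); intro r; rewrite <- from_componentsP.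
  destruct (exists_support r) as (L & N & Hr).
  rewrite (sum_components_lsum N Hr); simpl.
  transitivity (rm_act M (rsum (fun x => rmul r (local_unit x)) L) m).
  - rewrite (act_rsum HM); apply lsum_ext; intros x _; symmetry; apply (act_rmul HM).
  - rewrite (rsum_rmul_local_unit N Hr); reflexivity.
Qed.

End CUnital.

Lemma to_components_RLinear : RLinear M (F_obj EModule_of_RMod) to_components.
Proof.
  split.
  - intros m n; apply functional_extensionality_dep; intro x; apply component_ext; simpl.
    apply (act_additive HM).
  - intros r m; apply functional_extensionality_dep; intro y; apply component_ext.
    destruct (exists_support r) as (L & N & Hr).
    rewrite (F_act_lsum N Hr), (additive_lsum (component_val_additive (x := y))).
    simpl; rewrite <- (act_rmul HM), (local_unit_rmul_rsum y N Hr), (act_rsum HM).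
    apply lsum_ext; intros x _.
    unfold local_unit; rewrite <- (act_rmul HM), rmul_single, comp_id_r; reflexivity.
Qed.

End Components.

Theorem proposition6p6 : forall E : PreaddCat,
  (* F(P) = prod_x P(x), with (r p)(y) = sum_x r(x,y).p(x),
     is a c-unital left R_E-module *)
  (forall P : EModule E, is_RMod (F_obj P) /\ c_unital (F_obj P)) /\
  (* F is a functor: on morphisms it acts componentwise, giving R-linear maps *)
  (forall (P Q : EModule E) (phi : forall x, em_obj P x -> em_obj Q x),
      EHom P Q phi -> RLinear (F_obj P) (F_obj Q) (F_mor Q phi)) /\
  (* F is faithful *)
  (forall (P Q : EModule E) (phi psi : forall x, em_obj P x -> em_obj Q x),
      EHom P Q phi -> EHom P Q psi ->
      (forall p, F_mor Q phi p = F_mor Q psi p) ->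
      forall x (v : em_obj P x), phi x v = psi x v) /\
  (* F is full *)
  (forall (P Q : EModule E) (g : rm_car (F_obj P) -> rm_car (F_obj Q)),
      RLinear (F_obj P) (F_obj Q) g ->
      exists phi : forall x, em_obj P x -> em_obj Q x,
        EHom P Q phi /\ forall p, g p = F_mor Q phi p) /\
  (* F is essentially surjective onto the c-unital left R_E-modules *)
  (forall M : RModData E, is_RMod M -> c_unital M ->
      exists (P : EModule E) (f : rm_car M -> rm_car (F_obj P))
             (g : rm_car (F_obj P) -> rm_car M),
        RLinear M (F_obj P) f /\ RLinear (F_obj P) M g /\
        (forall m, g (f m) = m) /\ (forall p, f (g p) = p)).
Proof.
  intro E; split; [|split; [|split; [|split]]].
  - intro P; split; [apply F_is_RMod|apply F_c_unital].
  - apply F_mor_RLinear.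
  - intros P Q phi psi _ _; apply F_mor_faithful.
  - apply F_full.
  - intros M HM HC.
    exists (EModule_of_RMod HM), (to_components HM), (from_components HC).
    pose proof (from_to_components HM HC) as gK.
    pose proof (to_from_components (HM := HM) HC) as fK.
    split; [apply to_components_RLinear|].
    split; [exact (RLinear_inverse (to_components_RLinear HM) gK fK)|].
    split; [exact gK|exact fK].
Qed.
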